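(* For every even $n\ge 6$ there exist Boolean bent functions $f,f'\colon\mathbb F_2^n\to\mathbb F_2$ that are not extended-affine equivalent but whose translation designs $\operatorname{dev}(G_f)$ and $\operatorname{dev}(G_{f'})$ are isomorphic. (Hence, for Boolean bent functions, isomorphism of the designs $\operatorname{dev}(G_f)$ is a strictly coarser equivalence relation than EA-equivalence for every even $n\ge6$.)
   Context: A Boolean function $f\colon\mathbb F_2^n\to\mathbb F_2$ ($n$ even) is bent if $\sum_{\mathbf x}(-1)^{f(\mathbf x)\oplus\langle\mathbf a,\mathbf x\rangle}=\pm2^{n/2}$ for all $\mathbf a\in\mathbb F_2^n$. Boolean functions $f,f'$ are EA-equivalent if $f=f'\circ A_2\oplus A_3$ for an affine permutation $A_2$ of $\mathbb F_2^n$ and an affine function $A_3\colon\mathbb F_2^n\to\mathbb F_2$. $G_f=\{(\mathbf x,f(\mathbf x))\}\subseteq\mathbb F_2^n\times\mathbb F_2$ is the graph of $f$; $\operatorname{dev}(A)$ denotes the incidence structure with point set the ambient group and blocks all translates $A+g$. Two incidence structures with incidence matrices $M,M'$ are isomorphic if $M=PM'Q$ for permutation matrices $P,Q$. *)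

From HB Require Import structures.
From mathcomp Require Import all_boot all_order all_fingroup all_algebra.
Set Implicit Arguments. Unset Strict Implicit. Unset Printing Implicit Defensive.
Import GRing.Theory.
Local Open Scope ring_scope.

Notation vecF2 n := 'rV['F_2]_n.

Definition dotF2 n (a x : vecF2 n) : 'F_2 := \sum_(i < n) a 0 i * x 0 i.

Definition sgnF2 (b : 'F_2) : int := if b == 0 then 1 else -1.

Definition walsh n (f : vecF2 n -> 'F_2) (a : vecF2 n) : int :=
  \sum_(x : vecF2 n) sgnF2 (f x + dotF2 a x).

Definition bent n (f : vecF2 n -> 'F_2) : Prop :=
  forall a : vecF2 n,
    walsh f a = (2 ^ n./2)%:Z \/ walsh f a = - (2 ^ n./2)%:Z.

Definition EA_equiv n (f f' : vecF2 n -> 'F_2) : Prop :=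
  exists (M : 'M['F_2]_n) (b c : vecF2 n) (d : 'F_2),
    M \in unitmx /\
    forall x : vecF2 n, f x = f' (x *m M + b) + (dotF2 c x + d).

Definition ambient n := (vecF2 n * 'F_2)%type.
Definition addA n (u v : ambient n) : ambient n := (u.1 + v.1, u.2 + v.2).
Definition graph n (f : vecF2 n -> 'F_2) : {set ambient n} :=
  [set (x, f x) | x : vecF2 n].

Definition translate n (A : {set ambient n}) (g : ambient n) : {set ambient n} :=
  [set addA u g | u in A].
Definition dev_blocks n (A : {set ambient n}) : {set {set ambient n}} :=
  [set translate A g | g : ambient n].

(* Isomorphism of the incidence structures dev(A), dev(B)
   (point set = ambient group, blocks = sets of points): a bijection of
   points mapping the block set of dev(A) onto the block set of dev(B).
   (For simple incidence structures this is equivalent to M = P M' Q.) *)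
Definition dev_isomorphic n (A B : {set ambient n}) : Prop :=
  exists s : {perm ambient n},
    [set [set s u | u in X] | X : {set ambient n} in dev_blocks A] = dev_blocks B.

From Pilot Require Import Defs.
From mathcomp Require Import all_boot all_order all_fingroup all_algebra.
From mathcomp Require Import zify ring.
Set Implicit Arguments. Unset Strict Implicit. Unset Printing Implicit Defensive.
Import GRing.Theory Num.Theory.
Local Open Scope ring_scope.

(* Write n = 2m and z = (x, y) with x, y in F_2^m.  Take f' = q with q(z) = <x, y>
   and f = q + g with g(y) = y_0 y_1 y_2.  Both are of Maiorana-McFarland type, so every
   derivative in a nonzero direction is balanced and they are bent.  Third derivatives of
   q vanish, EA-equivalence preserves this, and f has a nonzero one, so f and f' are not
   EA-equivalent.  But with pi(z) = z + (grad g(y), 0), an involution, one has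
   f(z + a) = f(z) + f(a) + B(pi z, pi a) for the polar form B of q; hence the point map
   (z, t) |-> (pi z, q(pi z) + f(z) + t) sends each translate of G_f onto a translate of
   G_q, an isomorphism of dev(G_f) onto dev(G_q). *)

Lemma F2_two : 2 = 0 :> 'F_2.
Proof. by apply/eqP. Qed.

Lemma F2_cases (x : 'F_2) : x = 0 \/ x = 1.
Proof. by case: x => [[|[|k]]] // ?; [left | right]; apply: val_inj. Qed.

Lemma addrr_F2vec n (v : 'rV['F_2]_n) : v + v = 0.
Proof. by apply/rowP => i; rewrite !mxE; ring: F2_two. Qed.

Lemma addrK_F2vec n (v w : 'rV['F_2]_n) : v + w + w = v.
Proof. by rewrite -addrA addrr_F2vec addr0. Qed.

Lemma exists_entry_eq1 n (u : 'rV['F_2]_n) : u != 0 -> exists i : 'I_n, u 0 i = 1.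
Proof.
move=> u_neq0; case: (pickP (fun i => u 0 i == 1)) => [i /eqP ui | no1].
  by exists i.
case/eqP: u_neq0; apply/rowP => i; rewrite mxE.
by case: (F2_cases (u 0 i)) => // ui; move: (no1 i); rewrite ui eqxx.
Qed.

Lemma imset_inj (T U : finType) (G : T -> U) (rho : T -> T) :
  injective rho -> [set G (rho x) | x : T] = [set G x | x : T].
Proof.
move=> rho_inj; apply/setP => y; apply/imsetP/imsetP => [[x _ ->] | [x _ ->]].
  by exists (rho x).
by exists (invF rho_inj x); rewrite ?f_invF.
Qed.

Lemma sgnF2D (b c : 'F_2) : sgnF2 (b + c) = sgnF2 b * sgnF2 c.
Proof. by case: (F2_cases b) => ->; case: (F2_cases c) => ->. Qed.

Lemma sgnF2_add1 (b : 'F_2) : sgnF2 (b + 1) = - sgnF2 b.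
Proof. by case: (F2_cases b) => ->. Qed.

Lemma dotF2D n (a x y : 'rV['F_2]_n) : dotF2 a (x + y) = dotF2 a x + dotF2 a y.
Proof. by rewrite /dotF2 -big_split; apply: eq_bigr => i _; rewrite mxE mulrDr. Qed.

Lemma dotF20 n (a : 'rV['F_2]_n) : dotF2 a 0 = 0.
Proof. by rewrite /dotF2 big1 // => i _; rewrite mxE mulr0. Qed.

Lemma sum_sgnF2_eq0 n (H : 'rV['F_2]_n -> 'F_2) e :
  (forall x, H (x + e) = H x + 1) -> \sum_x sgnF2 (H x) = 0.
Proof.
move=> He; set S := \sum_x _.
have S_opp : S = - S.
  rewrite /S {1}(reindex_inj (addIr e)) /= -sumrN.
  by apply: eq_bigr => x _; rewrite He sgnF2_add1.
have : S *+ 2 == 0 by rewrite mulr2n {1}S_opp addNr.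
by rewrite mulrn_eq0 => /eqP.
Qed.

Definition autocorr n (F : 'rV['F_2]_n -> 'F_2) (u : 'rV['F_2]_n) : int :=
  \sum_x sgnF2 (F x + F (x + u)).

Lemma walsh_sqr n (F : 'rV['F_2]_n -> 'F_2) a :
  walsh F a ^+ 2 = \sum_u sgnF2 (dotF2 a u) * autocorr F u.
Proof.
rewrite expr2 /walsh big_distrlr /=.
transitivity (\sum_x \sum_u sgnF2 (dotF2 a u) * sgnF2 (F x + F (x + u))).
  apply: eq_bigr => x _; rewrite (reindex_inj (addrI x)) /=.
  apply: eq_bigr => u _; rewrite -!sgnF2D dotF2D; congr sgnF2; ring: F2_two.
by rewrite exchange_big; apply: eq_bigr => u _; rewrite /autocorr big_distrr.
Qed.

Lemma autocorr0 n (F : 'rV['F_2]_n -> 'F_2) : autocorr F 0 = (2 ^ n)%N%:Z.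
Proof.
rewrite /autocorr (eq_bigr (fun _ => 1)) => [|x _]; last first.
  by rewrite addr0 (_ : F x + F x = 0) //; ring: F2_two.
by rewrite sumr_const card_mx card_Fp // mul1n -natz.
Qed.

Lemma bent_of_autocorr n (F : 'rV['F_2]_n -> 'F_2) :
  ~~ odd n -> (forall u, u != 0 -> autocorr F u = 0) -> bent F.
Proof.
move=> n_even autocorr_nz a.
have : walsh F a ^+ 2 = (2 ^ n./2)%N%:Z ^+ 2.
  rewrite walsh_sqr (bigD1 0) //= big1 => [|u u_neq0]; last first.
    by rewrite autocorr_nz // mulr0.
  rewrite dotF20 autocorr0 mul1r addr0 expr2 -PoszM -expnD addnn.
  by rewrite -{1}(odd_double_half n) (negbTE n_even).
by move/eqP; rewrite eqf_sqr => /orP [/eqP -> | /eqP ->]; [left | right].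
Qed.

(* Coordinates indexed by [nat]; out-of-range indices read as [0]. *)
Definition entry n (z : 'rV['F_2]_n) (k : nat) : 'F_2 :=
  if insub k is Some i then z 0 i else 0.

Definition unit_vec n (k : nat) : 'rV['F_2]_n := \row_(i < n) ((i : nat) == k)%:R.

Lemma entryD n (z w : 'rV['F_2]_n) k : entry (z + w) k = entry z k + entry w k.
Proof. by rewrite /entry; case: insub => [i|]; rewrite ?mxE ?addr0. Qed.

Lemma entryZ n c (z : 'rV['F_2]_n) k : entry (c *: z) k = c * entry z k.
Proof. by rewrite /entry; case: insub => [i|]; rewrite ?mxE ?mulr0. Qed.

Lemma entry0 n k : entry (0 : 'rV['F_2]_n) k = 0.
Proof. by rewrite /entry; case: insub => [i|]; rewrite ?mxE. Qed.

Lemma entry_ord n (z : 'rV['F_2]_n) (i : 'I_n) : entry z i = z 0 i.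
Proof. by rewrite /entry valK. Qed.

Lemma entry_out n (z : 'rV['F_2]_n) k : (n <= k)%N -> entry z k = 0.
Proof. by move=> le_nk; rewrite /entry insubN // -leqNgt. Qed.

Lemma entry_unit_vec n k j : (k < n)%N -> entry (unit_vec n k) j = (j == k)%:R.
Proof.
move=> lt_kn; case: (ltnP j n) => [lt_jn | le_nj]; first by rewrite /entry insubT mxE.
by rewrite entry_out // (_ : j == k = false) //; apply/negbTE; lia.
Qed.

Definition derivF2 n (a : 'rV['F_2]_n) (F : 'rV['F_2]_n -> 'F_2) (x : 'rV['F_2]_n) : 'F_2 :=
  F (x + a) + F x.

Definition deg_le2 n (F : 'rV['F_2]_n -> 'F_2) : Prop :=
  forall a b c x, derivF2 c (derivF2 b (derivF2 a F)) x = 0.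

Lemma derivF2E n (a : 'rV['F_2]_n) F x : derivF2 a F x = F (x + a) + F x.
Proof. by []. Qed.

Lemma deg_le2_affine n (c : 'rV['F_2]_n) d : deg_le2 (fun y => dotF2 c y + d).
Proof.
move=> a b c' x.
have da y : derivF2 a (fun y => dotF2 c y + d) y = dotF2 c a.
  by rewrite derivF2E dotF2D; ring: F2_two.
have dda y : derivF2 b (derivF2 a (fun y => dotF2 c y + d)) y = 0.
  by rewrite derivF2E !da; ring: F2_two.
by rewrite derivF2E !dda addr0.
Qed.

Lemma deg_le2_EA n (f f' : 'rV['F_2]_n -> 'F_2) : EA_equiv f f' -> deg_le2 f' -> deg_le2 f.
Proof.
case=> M [b0 [c0 [d [_ f_def]]]] f'_le2 a b c x.
have shift y v : (y + v) *m M + b0 = (y *m M + b0) + v *m M by rewrite mulmxDl addrAC.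
transitivity (derivF2 (c *m M) (derivF2 (b *m M) (derivF2 (a *m M) f')) (x *m M + b0)
  + derivF2 c (derivF2 b (derivF2 a (fun y => dotF2 c0 y + d))) x).
  by rewrite /derivF2 !f_def !shift; ring.
by rewrite f'_le2 deg_le2_affine addr0.
Qed.

Lemma deriv3_monomial n i j k : (i < n)%N -> (j < n)%N -> (k < n)%N ->
  i != j -> j != k -> i != k ->
  derivF2 (unit_vec n k) (derivF2 (unit_vec n j) (derivF2 (unit_vec n i)
    (fun z => entry z i * entry z j * entry z k))) 0 = 1.
Proof.
move=> lt_in lt_jn lt_kn ne_ij ne_jk ne_ik.
rewrite /derivF2 !entryD !entry0 !entry_unit_vec // !eqxx.
rewrite (eq_sym j i) (eq_sym k i) (eq_sym k j).
by rewrite (negbTE ne_ij) (negbTE ne_jk) (negbTE ne_ik) /=; ring: F2_two.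
Qed.

Section MaioranaMcFarland.

Variable n : nat.
Hypothesis n_even : ~~ odd n.
Local Notation m := n./2.
Local Notation vec := 'rV['F_2]_n.

Let n_double : n = (m + m)%N.
Proof. by rewrite -{1}(odd_double_half n) (negbTE n_even) add0n -addnn. Qed.

Definition qform (z : vec) : 'F_2 := \sum_(i < m) entry z i * entry z (i + m).

Definition bform (z w : vec) : 'F_2 :=
  \sum_(i < m) (entry z i * entry w (i + m) + entry w i * entry z (i + m)).

Lemma qformD z w : qform (z + w) = qform z + qform w + bform z w.
Proof.
by rewrite /qform /bform -!big_split; apply: eq_bigr => i _; rewrite !entryD /=; ring.
Qed.

Lemma bformC z w : bform z w = bform w z.
Proof. by apply: eq_bigr => i _; ring. Qed.

Lemma bformDl z z' w : bform (z + z') w = bform z w + bform z' w.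
Proof. by rewrite /bform -big_split; apply: eq_bigr => i _; rewrite !entryD /=; ring. Qed.

Lemma bformDr z w w' : bform z (w + w') = bform z w + bform z w'.
Proof. by rewrite bformC bformDl !(bformC z). Qed.

Lemma bformZl c z w : bform (c *: z) w = c * bform z w.
Proof. by rewrite /bform mulr_sumr; apply: eq_bigr => i _; rewrite !entryZ; ring. Qed.

Lemma sum_delta (F : nat -> 'F_2) k :
  (k < m)%N -> \sum_(i < m) ((i : nat) == k)%:R * F i = F k.
Proof.
move=> lt_km; rewrite (bigD1 (Ordinal lt_km)) //= eqxx mul1r big1 ?addr0 // => i ne_ik.
by rewrite (negbTE (ne_ik : (i : nat) != k)) mul0r.
Qed.

Lemma bform_unit_vec k w : (k < m)%N -> bform (unit_vec n k) w = entry w (k + m).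
Proof.
move=> lt_km; rewrite /bform -(sum_delta (fun i => entry w (i + m)) lt_km).
apply: eq_bigr => i _; rewrite !entry_unit_vec; try lia.
by rewrite (_ : (i + m == k)%N = false) ?mulr0 ?addr0 //; apply/negbTE; lia.
Qed.

Lemma bform_unit_vec_y k w : (k < m)%N -> bform (unit_vec n (k + m)) w = entry w k.
Proof.
move=> lt_km; rewrite /bform -(sum_delta (fun i => entry w i) lt_km).
apply: eq_bigr => i _; rewrite !entry_unit_vec ?eqn_add2r; try lia.
rewrite (_ : ((i : nat) == k + m)%N = false) ?mul0r ?add0r 1?mulrC //; apply/negbTE.
by move: (ltn_ord i); lia.
Qed.

Definition in_xspace (x : vec) : Prop := forall j, (m <= j)%N -> entry x j = 0.

Lemma unit_vec_xspace k : (k < m)%N -> in_xspace (unit_vec n k).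
Proof.
move=> lt_km j le_mj; rewrite entry_unit_vec; last by lia.
by rewrite (_ : j == k = false) //; apply/negbTE; lia.
Qed.

Lemma entryD_xspace z x j : in_xspace x -> (m <= j)%N -> entry (z + x) j = entry z j.
Proof. by move=> x_x le_mj; rewrite entryD x_x ?addr0. Qed.

Lemma bform_xspace x x' : in_xspace x -> in_xspace x' -> bform x x' = 0.
Proof.
move=> x_x x_x'; rewrite /bform big1 // => i _.
by rewrite (x_x (i + m)%N) 1?(x_x' (i + m)%N) ?leq_addl // !mulr0 addr0.
Qed.

Lemma bform_nondeg_xspace u : u != 0 ->
  exists e, bform u e = 1 /\ (in_xspace e \/ in_xspace u).
Proof.
move=> u_neq0.
case: (pickP (fun j : 'I_n => (m <= j)%N && (u 0 j == 1))) => [j /andP [le_mj /eqP uj]|no_y].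
  have lt_jm_m : (j - m < m)%N by move: (ltn_ord j); lia.
  exists (unit_vec n (j - m)); split; last by left; exact: unit_vec_xspace.
  by rewrite bformC bform_unit_vec // subnK // entry_ord.
have u_x : in_xspace u.
  move=> j le_mj; case: (ltnP j n) => [lt_jn | ]; last exact: entry_out.
  move: (no_y (Ordinal lt_jn)); rewrite /= le_mj (entry_ord u (Ordinal lt_jn)).
  by case: (F2_cases (u 0 (Ordinal lt_jn))) => ->.
have [i ui] := exists_entry_eq1 u_neq0.
have lt_im : (i < m)%N.
  by rewrite ltnNge; apply/negP => le_mi; move: (u_x i le_mi); rewrite entry_ord ui.
exists (unit_vec n (i + m)); split; last by right.
by rewrite bformC bform_unit_vec_y // entry_ord.
Qed.

Lemma qform_diff_shift x e u :
  qform (x + e) + qform (x + e + u) = qform x + qform (x + u) + bform e u.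
Proof. by rewrite !qformD !bformDl; ring: F2_two. Qed.

Lemma bent_qform_add (F G : vec -> 'F_2) :
  (forall z x, in_xspace x -> G (z + x) = G z) ->
  (forall z, F z = qform z + G z) -> bent F.
Proof.
move=> G_y F_def; apply: bent_of_autocorr => // u u_neq0.
have [e [Bue1 e_u_x]] := bform_nondeg_xspace u_neq0.
have DG x : G (x + e) + G (x + e + u) = G x + G (x + u).
  case: e_u_x => [e_x | u_x]; first by rewrite addrAC !(G_y _ _ e_x).
  by rewrite !(G_y _ _ u_x); ring: F2_two.
apply: (sum_sgnF2_eq0 (e := e)) => x.
by rewrite !F_def addrACA qform_diff_shift bformC Bue1 DG; ring.
Qed.

Hypothesis n_ge6 : (6 <= n)%N.

Let m_ge3 : (3 <= m)%N.
Proof. by move: n_ge6; rewrite n_double; lia. Qed.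

Definition cubic (z : vec) : 'F_2 := entry z m * entry z m.+1 * entry z m.+2.

(* The gradient of [cubic] in the [y]-variables, placed in the [x]-half. *)
Definition grad_cubic (z : vec) : vec :=
  (entry z m.+1 * entry z m.+2) *: unit_vec n 0
  + (entry z m * entry z m.+2) *: unit_vec n 1
  + (entry z m * entry z m.+1) *: unit_vec n 2.

Definition qcubic (z : vec) : 'F_2 := qform z + cubic z.

Definition twist (z : vec) : vec := z + grad_cubic z.

Lemma cubic_xspace z x : in_xspace x -> cubic (z + x) = cubic z.
Proof. by move=> x_x; rewrite /cubic !(entryD_xspace _ x_x) //; lia. Qed.

Lemma grad_cubic_xspace z x : in_xspace x -> grad_cubic (z + x) = grad_cubic z.
Proof. by move=> x_x; rewrite /grad_cubic !(entryD_xspace _ x_x) //; lia. Qed.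

Lemma grad_cubic_in_xspace z : in_xspace (grad_cubic z).
Proof.
move=> j le_mj; rewrite !entryD !entryZ !unit_vec_xspace //; try lia.
by rewrite !mulr0 !addr0.
Qed.

Lemma bform_grad_cubic z w : bform (grad_cubic z) w =
  entry z m.+1 * entry z m.+2 * entry w m + entry z m * entry z m.+2 * entry w m.+1
  + entry z m * entry z m.+1 * entry w m.+2.
Proof. by rewrite !bformDl !bformZl !bform_unit_vec //=; lia. Qed.

Lemma cubicD z a :
  cubic (z + a) = cubic z + cubic a + bform (grad_cubic z) a + bform (grad_cubic a) z.
Proof. by rewrite !bform_grad_cubic /cubic !entryD; ring: F2_two. Qed.

Lemma twistK : involutive twist.
Proof.
by move=> z; rewrite /twist (grad_cubic_xspace _ (grad_cubic_in_xspace z)) addrK_F2vec.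
Qed.

Lemma qcubicD z a : qcubic (z + a) = qcubic z + qcubic a + bform (twist z) (twist a).
Proof.
rewrite /qcubic /twist qformD cubicD (bformDl z) (bformDr z) (bformDr (grad_cubic z)).
rewrite (bform_xspace (grad_cubic_in_xspace z) (grad_cubic_in_xspace a)).
by rewrite (bformC z (grad_cubic a)); ring.
Qed.

Lemma derivF2_qform a y : derivF2 a qform y = qform a + bform y a.
Proof. by rewrite derivF2E qformD; ring: F2_two. Qed.

Lemma deg_le2_qform : deg_le2 qform.
Proof.
move=> a b c x.
have ddq y : derivF2 b (derivF2 a qform) y = bform b a.
  by rewrite derivF2E !derivF2_qform bformDl; ring: F2_two.
by rewrite derivF2E !ddq; ring: F2_two.
Qed.

Lemma qcubic_not_deg_le2 : ~ deg_le2 qcubic.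
Proof.
move=> qc_le2; set e0 := unit_vec n m; set e1 := unit_vec n m.+1; set e2 := unit_vec n m.+2.
have := qc_le2 e0 e1 e2 0.
have -> : derivF2 e2 (derivF2 e1 (derivF2 e0 qcubic)) 0
  = derivF2 e2 (derivF2 e1 (derivF2 e0 qform)) 0
  + derivF2 e2 (derivF2 e1 (derivF2 e0 cubic)) 0.
  by rewrite /derivF2 /qcubic; ring.
by rewrite deg_le2_qform add0r deriv3_monomial //; lia.
Qed.

Lemma qcubic_not_EA_qform : ~ EA_equiv qcubic qform.
Proof. by move=> /deg_le2_EA /(_ deg_le2_qform); exact: qcubic_not_deg_le2. Qed.

Definition ambient_twist (p : ambient n) : ambient n :=
  (twist p.1, qform (twist p.1) + qcubic p.1 + p.2).

Lemma ambient_twist_inj : injective ambient_twist.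
Proof.
move=> [x s] [y t] eq_st.
have eq_xy : x = y := can_inj twistK (congr1 fst eq_st).
by subst y; congr pair; apply: addrI (congr1 snd eq_st).
Qed.

Lemma ambient_twist_translate g :
  [set ambient_twist u | u in translate (graph qcubic) g]
  = translate (graph qform) (ambient_twist g).
Proof.
case: g => a b; rewrite /translate /graph -!imset_comp.
have shift_inj : injective (fun x => twist (x + a) + twist a).
  by move=> x y /addIr /(can_inj twistK) /addIr.
rewrite -[RHS](imset_inj _ shift_inj); apply: eq_imset => x /=.
have qcx : qcubic x = qcubic (x + a) + qcubic a + bform (twist (x + a)) (twist a).
  by rewrite -qcubicD addrK_F2vec.
by rewrite /ambient_twist /Defs.addA /= addrK_F2vec qcx qformD; congr pair; ring: F2_two.
Qed.

Lemma dev_isomorphic_qcubic_qform : dev_isomorphic (graph qcubic) (graph qform).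
Proof.
exists (perm ambient_twist_inj); rewrite /dev_blocks -imset_comp.
rewrite (eq_imset (g := fun g => translate (graph qform) (ambient_twist g))) => [|g].
  exact: imset_inj ambient_twist_inj.
by rewrite /= -ambient_twist_translate; apply: eq_imset => u; rewrite permE.
Qed.

End MaioranaMcFarland.

Local Close Scope ring_scope.

Theorem theorem2 (n : nat) (hn : 6 <= n) (heven : ~~ odd n) :
  exists f f' : 'rV['F_2]_n -> 'F_2,
    [/\ bent f, bent f', ~ EA_equiv f f' &
        dev_isomorphic (graph f) (graph f')].
Proof.
exists (@qcubic n), (@qform n); split.
- by apply: (bent_qform_add heven (G := @cubic n)) => // z x; apply: cubic_xspace.
- by apply: (bent_qform_add heven (G := fun _ => 0%R)) => // z; rewrite addr0.
- exact: qcubic_not_EA_qform.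
- exact: dev_isomorphic_qcubic_qform.
Qed.
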